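(* Let $\mathcal{C}$ be a full reflective subcategory of $\mathsf{Top}$, closed under isomorphisms and containing the two-point discrete space. (1) If there is a discrete space not belonging to $\mathcal{C}$, then the empty space is the only object of $\mathcal{C}$ that is finitely generated with respect to embeddings. (2) If $\mathcal{C}$ contains all discrete spaces, then $\mathcal{C}$ contains all Hausdorff spaces that have only finitely many accumulation points.
   Context: An accumulation point of a space is a non-isolated point. An embedding is an injective continuous map $m:X\to Y$ such that every open set of $X$ has the form $m^{-1}(U)$ for $U$ open in $Y$. An object $X$ of $\mathcal{C}$ is finitely generated w.r.t. embeddings if for every directed diagram $(Z_i)_{i\in I}$ in $\mathcal{C}$ (indexed by a directed poset, i.e. every finite subset has an upper bound) whose connecting morphisms $z_{i,j}$ are embeddings, with colimit cocone $c_i:Z_i\to Z$ in $\mathcal{C}$, every morphism $f:X\to Z$ factorizes as $f=c_i\cdot g$ for some $i$ and $g:X\to Z_i$, and if also $f=c_i\cdot g'$ then $z_{i,j}\cdot g=z_{i,j}\cdot g'$ for some connecting morphism $z_{i,j}$. *)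

From HB Require Import structures.
From mathcomp Require Import all_boot all_order all_algebra.
From mathcomp Require Import all_classical all_reals topology.
Set Implicit Arguments. Unset Strict Implicit. Unset Printing Implicit Defensive.
Import Order.TTheory.
Local Open Scope classical_set_scope.

Definition is_discrete (X : topologicalType) : Prop := forall A : set X, open A.

Definition homeomorphic (X Y : topologicalType) : Prop :=
  exists (f : X -> Y) (g : Y -> X),
    continuous f /\ continuous g /\ cancel f g /\ cancel g f.

Definition embedding (X Y : topologicalType) (m : X -> Y) : Prop :=
  injective m /\ continuous m /\
  forall A : set X, open A -> exists U : set Y, open U /\ A = m @^-1` U.

Definition accumulation_point (X : topologicalType) (x : X) : Prop :=
  ~ open [set x].

(* A full subcategory of Top is given by a class of objects C. *)
Definition iso_closed (C : topologicalType -> Prop) : Prop :=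
  forall X Y : topologicalType, homeomorphic X Y -> C X -> C Y.

Definition reflective (C : topologicalType -> Prop) : Prop :=
  forall X : topologicalType, exists (R : topologicalType) (eta : X -> R),
    C R /\ continuous eta /\
    forall (Y : topologicalType) (f : X -> Y), C Y -> continuous f ->
      exists g : R -> Y, continuous g /\ g \o eta = f /\
        forall g' : R -> Y, continuous g' -> g' \o eta = f -> g' = g.

(* Directed poset: every finite subset (incl. the empty one) has an upper bound. *)
Definition directed (disp : Order.disp_t) (I : porderType disp) : Prop :=
  inhabited I /\ forall i j : I, exists k, (i <= k)%O /\ (j <= k)%O.

Definition is_diagram (disp : Order.disp_t) (I : porderType disp)
  (Z : I -> topologicalType) (z : forall i j : I, (i <= j)%O -> Z i -> Z j) : Prop :=
  (forall i j (h : (i <= j)%O), continuous (z i j h)) /\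
  (forall i (h : (i <= i)%O), z i i h = id) /\
  (forall i j k (hij : (i <= j)%O) (hjk : (j <= k)%O) (hik : (i <= k)%O),
      z j k hjk \o z i j hij = z i k hik).

Definition is_colimit_in (C : topologicalType -> Prop)
  (disp : Order.disp_t) (I : porderType disp)
  (Z : I -> topologicalType) (z : forall i j : I, (i <= j)%O -> Z i -> Z j)
  (L : topologicalType) (c : forall i, Z i -> L) : Prop :=
  C L /\ (forall i, continuous (c i)) /\
  (forall i j (h : (i <= j)%O), c j \o z i j h = c i) /\
  forall (Y : topologicalType) (e : forall i, Z i -> Y), C Y ->
    (forall i, continuous (e i)) -> (forall i j (h : (i <= j)%O), e j \o z i j h = e i) ->
    exists u : L -> Y, continuous u /\ (forall i, u \o c i = e i) /\
      forall u' : L -> Y, continuous u' -> (forall i, u' \o c i = e i) -> u' = u.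

Definition fin_gen_emb (C : topologicalType -> Prop) (X : topologicalType) : Prop :=
  forall (disp : Order.disp_t) (I : porderType disp)
    (Z : I -> topologicalType) (z : forall i j : I, (i <= j)%O -> Z i -> Z j)
    (L : topologicalType) (c : forall i, Z i -> L),
    directed I -> (forall i, C (Z i)) -> @is_diagram disp I Z z ->
    (forall i j (h : (i <= j)%O), embedding (z i j h)) ->
    @is_colimit_in C disp I Z z L c ->
    forall f : X -> L, continuous f ->
      (exists (i : I) (g : X -> Z i), continuous g /\ f = c i \o g) /\
      (forall (i : I) (g g' : X -> Z i), continuous g -> continuous g' ->
         f = c i \o g -> f = c i \o g' ->
         exists (j : I) (h : (i <= j)%O), z i j h \o g = z i j h \o g').

From HB Require Import structures.
From mathcomp Require Import all_boot all_order all_algebra.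
From mathcomp Require Import all_classical all_reals topology.
From mathcomp Require Import finmap.
Set Implicit Arguments. Unset Strict Implicit. Unset Printing Implicit Defensive.
Local Open Scope classical_set_scope.

(* Maps into the two-point discrete space show that the clopen sets of the
   reflection R of a space X are determined by their preimages in X, and that
   every clopen set of X is such a preimage. If X is discrete and the clopen
   sets lifting its singletons cover R, they partition R and define a
   continuous retraction of the unit X -> R, so X is homeomorphic to R and lies
   in C. The lifts cover R when X is finite, and whenever the unit is onto.

   (1) A discrete space D is the colimit in C of the directed diagram of its
   finite subspaces, with cocone given by its reflection R. If a nonempty X is
   finitely generated, the constant maps X -> R factor through finite stages,
   so the unit of D is onto and D lies in C.

   (2) Let A be the finite set of accumulation points of the Hausdorff space X.
   For each family W of pairwise disjoint open neighbourhoods of the points of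
   A, the map collapsing every W a onto a is continuous into discrete X and so
   lifts to G W : R -> X. The collapses separate points and their fibres form
   neighbourhood bases, hence for each r there is exactly one x with
   G W r = collapse W x for all W, and r |-> x is a continuous retraction of
   the unit. *)

Lemma comp_continuous (S T U : topologicalType) (f : S -> T) (g : T -> U) :
  continuous f -> continuous g -> continuous (g \o f).
Proof. by move=> cf cg x; apply: continuous_comp; [exact: cf | exact: cg]. Qed.

Lemma continuous_of_locally_constant (S T : topologicalType) (f : S -> T) :
  (forall x, nbhs x (f @^-1` [set f x])) -> continuous f.
Proof.
move=> fc x B /nbhs_singleton Bfx; apply: filterS (fc x) => y /= ->.
exact: Bfx.
Qed.

Lemma discrete_continuous (S T : topologicalType) (f : S -> T) :
  is_discrete S -> continuous f.
Proof. by move=> dS; apply/continuousP => A _; exact: dS. Qed.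

Lemma discrete_topology_discrete (T : choiceType) : is_discrete (discrete_topology T).
Proof. by move=> A; exact: discrete_open. Qed.

Lemma discrete_topology_continuous (T : choiceType) (Y : topologicalType)
    (f : discrete_topology T -> Y) :
  continuous f.
Proof. by apply: discrete_continuous; exact: discrete_topology_discrete. Qed.

Lemma discrete_clopen (T : topologicalType) (A : set T) : is_discrete T -> clopen A.
Proof. by move=> dT; split; [exact: dT | rewrite -openC; exact: dT]. Qed.

Lemma open_preimage_discrete (S : topologicalType) (T : choiceType)
    (f : S -> discrete_topology T) (B : set T) :
  continuous f -> open (f @^-1` B).
Proof. by move/continuousP; apply; exact: discrete_open. Qed.

Lemma open_bigcap_finite (T : topologicalType) (I : choiceType) (D : set I)
    (F : I -> set T) :
  finite_set D -> (forall i, D i -> open (F i)) -> open (\bigcap_(i in D) F i).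
Proof.
move=> finD oF; rewrite -[X in open X]setCK setC_bigcap; apply: closed_openC.
by apply: closed_bigcup => // i Di; rewrite closedC; exact: oF.
Qed.

Lemma card_bool_two (K : Type) :
  ([set: K] #= [set: bool])%card -> exists t f : K, t <> f.
Proof.
move=> /card_bijP [f [g fg gf]].
pose bt : [set: bool] := SigSub (mem_set (I : setT true)).
pose bf : [set: bool] := SigSub (mem_set (I : setT false)).
exists (val (g bt)), (val (g bf)) => e.
have : g bt = g bf by apply: val_inj.
by move=> /(congr1 f); rewrite !gf => /(congr1 val).
Qed.

Definition is_reflection (C : topologicalType -> Prop) (X R : topologicalType)
    (eta : X -> R) : Prop :=
  C R /\ continuous eta /\
  forall (Y : topologicalType) (f : X -> Y), C Y -> continuous f ->
    exists g : R -> Y, continuous g /\ g \o eta = f /\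
      forall g' : R -> Y, continuous g' -> g' \o eta = f -> g' = g.

Section Reflection.
Variables (C : topologicalType -> Prop) (X R : topologicalType) (eta : X -> R).
Hypothesis reta : is_reflection C eta.

Lemma reflection_lift (Y : topologicalType) (f : X -> Y) :
  C Y -> continuous f -> exists2 g : R -> Y, continuous g & g \o eta = f.
Proof.
by move=> CY cf; have [g [cg [gf _]]] := reta.2.2 Y f CY cf; exists g.
Qed.

Lemma reflection_ext (Y : topologicalType) (g g' : R -> Y) :
  C Y -> continuous g -> continuous g' -> g \o eta = g' \o eta -> g = g'.
Proof.
move=> CY cg cg' e.
have [h [_ [_ hu]]] := reta.2.2 Y (g \o eta) CY (comp_continuous reta.2.1 cg).
by rewrite (hu _ cg erefl) (hu _ cg' (esym e)).
Qed.

Lemma reflection_retract_mem (q : R -> X) :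
  iso_closed C -> continuous q -> q \o eta = id -> C X.
Proof.
move=> isoC cq qeta; apply: (isoC R) reta.1; exists q, eta.
split=> //; split; first exact: reta.2.1.
split; last by move=> x; exact: (congr1 (fun h => h x) qeta).
have etaq : eta \o q = id.
  apply: (reflection_ext reta.1 (comp_continuous cq reta.2.1)).
    by move=> r; exact: cvg_id.
  by rewrite -compA qeta.
by move=> r; exact: (congr1 (fun h => h r) etaq).
Qed.

Section TwoPointTest.
Variables (K : topologicalType) (t f : K).
Hypotheses (CK : C K) (dK : is_discrete K) (tf : t <> f).

Definition indicator (T : Type) (S : set T) (x : T) : K :=
  if pselect (S x) then t else f.

Lemma indicatorE (T : Type) (S : set T) (x : T) : indicator S x = t <-> S x.
Proof. by rewrite /indicator; case: pselect => Sx; split=> // e; case: tf. Qed.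

Lemma indicator_continuous (T : topologicalType) (S : set T) :
  clopen S -> continuous (indicator S).
Proof.
move=> [oS cS]; apply: continuous_of_locally_constant => x.
have [Sx|nSx] := pselect (S x).
  by rewrite nbhsE; exists S => // y Sy; rewrite /= /indicator; do 2 case: pselect.
rewrite nbhsE; exists (~` S); first by split=> //; rewrite openC.
by move=> y nSy; rewrite /= /indicator; do 2 case: pselect.
Qed.

Lemma clopen_preimage_inj (S S' : set R) :
  clopen S -> clopen S' -> eta @^-1` S = eta @^-1` S' -> S = S'.
Proof.
move=> cS cS' e.
have ind_eq : indicator S = indicator S'.
  apply: (reflection_ext CK (indicator_continuous cS) (indicator_continuous cS')).
  by apply: boolp.funext => x; rewrite /= /indicator -[S _]/((eta @^-1` S) x) e.
by apply/seteqP; split=> r /indicatorE; [rewrite ind_eq | rewrite -ind_eq] => /indicatorE.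
Qed.

Lemma clopen_preimage_surj (B : set X) :
  clopen B -> exists2 S : set R, clopen S & eta @^-1` S = B.
Proof.
move=> cB; have [h ch he] := reflection_lift CK (indicator_continuous cB).
exists (h @^-1` [set t]).
  split; first by move/continuousP : ch; apply; exact: dK.
  by rewrite -openC preimage_setC; move/continuousP : ch; apply; exact: dK.
by apply/seteqP; split=> x; rewrite /= -[h _]/((h \o eta) x) he => /indicatorE.
Qed.

Lemma mem_of_clopen_singleton_cover (S : X -> set R) :
  iso_closed C -> (forall x, clopen (S x)) -> (forall x, eta @^-1` S x = [set x]) ->
  (forall r, exists x, S x r) -> C X.
Proof.
move=> isoC cS Seta cover.
have Sdisj x y r : S x r -> S y r -> x = y.
  move=> Sxr Syr; apply: boolp.contrapT => xy.
  have : S x `&` S y = set0.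
    apply: clopen_preimage_inj; [exact: clopenI | exact: clopen0 |].
    rewrite preimage_setI !Seta preimage_set0.
    by apply/seteqP; split=> // z [/= -> /xy].
  by move=> /seteqP[/(_ r (conj Sxr Syr))].
pose q r := projT1 (cid (cover r)).
have qP r : S (q r) r by rewrite /q; case: cid.
apply: (reflection_retract_mem (q := q)) => //.
  apply: continuous_of_locally_constant => r; rewrite nbhsE.
  exists (S (q r)); first by split; [case: (cS (q r)) | exact: qP].
  by move=> r' /Sdisj /(_ (qP r')).
apply: boolp.funext => x /=; apply: (Sdisj _ _ (eta x) (qP (eta x))).
by rewrite -[S _ _]/((eta @^-1` S x) x) Seta.
Qed.

Lemma clopen_singleton_preimages : is_discrete X ->
  exists S : X -> set R, (forall x, clopen (S x)) /\ (forall x, eta @^-1` S x = [set x]).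
Proof.
move=> dX; have /boolp.choice[S SP] : forall x, exists S : set R,
    clopen S /\ eta @^-1` S = [set x].
  by move=> x; have [S ? ?] := clopen_preimage_surj (discrete_clopen [set x] dX); exists S.
by exists S; split=> x; case: (SP x).
Qed.

Lemma finite_discrete_mem :
  iso_closed C -> is_discrete X -> finite_set [set: X] -> C X.
Proof.
move=> isoC dX finX; have [S [cS Seta]] := clopen_singleton_preimages dX.
apply: (mem_of_clopen_singleton_cover isoC cS Seta) => r.
have : \bigcup_(x in [set: X]) S x = [set: R].
  apply: clopen_preimage_inj; last first.
    rewrite preimage_bigcup preimage_setT; under eq_bigcupr do rewrite Seta.
    by apply/seteqP; split=> // x _; exists x.
  - exact: clopenT.
  split; first by apply: bigcup_open => x _; case: (cS x).
  by apply: closed_bigcup => // x _; case: (cS x).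
by move=> /seteqP[_ /(_ r I)][x _ Sxr]; exists x.
Qed.

Lemma discrete_mem_of_surjective :
  iso_closed C -> is_discrete X -> (forall r, exists x, eta x = r) -> C X.
Proof.
move=> isoC dX etaS; have [S [cS Seta]] := clopen_singleton_preimages dX.
apply: (mem_of_clopen_singleton_cover isoC cS Seta) => r.
have [x <-] := etaS r; exists x.
by rewrite -[S _ _]/((eta @^-1` S x) x) Seta.
Qed.
End TwoPointTest.
End Reflection.

Definition fset_incl (T : choiceType) := {fset T}.
HB.instance Definition _ (T : choiceType) := Choice.on (fset_incl T).

Lemma fsubset_anti (T : choiceType) : antisymmetric (@fsubset T).
Proof. by move=> A B /andP[AB BA]; apply/eqP; rewrite eqEfsubset AB BA. Qed.

HB.instance Definition _ (T : choiceType) :=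
  @Order.Le_isPOrder.Build (Order.Disp tt tt) (fset_incl T) (@fsubset T)
    (@fsubset_refl T) (@fsubset_anti T) (@fsubset_trans T).

Lemma fset_incl_le (T : choiceType) (F G : fset_incl T) : (F <= G)%O = (F `<=` G)%fset.
Proof. by []. Qed.

Section FinsetDiagram.
Variable D : topologicalType.

Definition fsub_space (F : fset_incl D) : topologicalType :=
  discrete_topology (fset_sub_type F).

Definition fsub_incl (F G : fset_incl D) (FG : (F <= G)%O) :
    fsub_space F -> fsub_space G :=
  fun x => FSetSub (fsubsetP FG _ (fsvalP x)).

Definition fsub_cocone (R : topologicalType) (eta : D -> R) (F : fset_incl D) :
    fsub_space F -> R :=
  fun x => eta (fsval x).
Arguments fsub_cocone {R} eta F.

Lemma fsub_incl_inj (F G : fset_incl D) (FG : (F <= G)%O) : injective (fsub_incl FG).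
Proof. by move=> x y /(congr1 val) /= eq_val; apply: val_inj. Qed.

Lemma fset_incl_directed : directed (fset_incl D).
Proof.
split; first exact: (inhabits (fset0 : fset_incl D)).
by move=> F G; exists (F `|` G)%fset; split; [exact: fsubsetUl | exact: fsubsetUr].
Qed.

Lemma fsub_incl_diagram : is_diagram fsub_incl.
Proof.
split; first by move=> F G FG; exact: discrete_topology_continuous.
by split=> [F FF | F G H FG GH FH]; apply: boolp.funext => x; apply: val_inj.
Qed.

Lemma fsub_incl_embedding (F G : fset_incl D) (FG : (F <= G)%O) :
  embedding (fsub_incl FG).
Proof.
split; first exact: fsub_incl_inj.
split; first exact: discrete_topology_continuous.
move=> B _; exists (fsub_incl FG @` B); split; first exact: discrete_open.
by apply/seteqP; split=> [x Bx | x [y By /fsub_incl_inj <-//]]; exists x.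
Qed.

Lemma fsub_cocone_singletons (Y : topologicalType) (e : forall F, fsub_space F -> Y) :
  (forall F G (FG : (F <= G)%O), e G \o fsub_incl FG = e F) ->
  forall F (x : fsub_space F),
    e F x = e (fset1 (fsval x) : fset_incl D) (FSetSub (fset11 (fsval x))).
Proof.
move=> ecomp F x; have xF : (fset1 (fsval x) <= F :> fset_incl D)%O.
  by rewrite fset_incl_le fsub1set fsvalP.
rewrite -(ecomp _ _ xF) /=; congr (e F _); exact: val_inj.
Qed.

Lemma fsub_cocone_colimit (C : topologicalType -> Prop) (R : topologicalType)
    (eta : D -> R) :
  is_discrete D -> is_reflection C eta -> is_colimit_in C fsub_incl (fsub_cocone eta).
Proof.
move=> dD reta; split; first exact: reta.1.
split; first by move=> F; exact: discrete_topology_continuous.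
split; first by move=> F G FG; apply: boolp.funext.
move=> Y e CY ce ecomp.
pose e1 d := e (fset1 d : fset_incl D) (FSetSub (fset11 d)).
have factorsE (u : R -> Y) : u \o eta = e1 <-> forall F, u \o fsub_cocone eta F = e F.
  split=> [ue F | ue]; apply: boolp.funext => x /=.
    by rewrite (fsub_cocone_singletons ecomp); exact: (congr1 (fun h => h _) ue).
  exact: (congr1 (fun h => h (FSetSub (fset11 x))) (ue (fset1 x : fset_incl D))).
have [u [cu [ue uu]]] := reta.2.2 Y e1 CY (discrete_continuous (f := e1) dD).
exists u; split=> //; split; first exact/factorsE.
by move=> u' cu' /factorsE; exact: uu.
Qed.
End FinsetDiagram.

Lemma fin_gen_emb_of_empty (C : topologicalType -> Prop) (X : topologicalType) :
  [set: X] = set0 -> fin_gen_emb C X.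
Proof.
move=> X0 disp I Z z L c [[i] _] _ _ _ _ f _.
have nX (x : X) : False by have : [set: X] x by []; rewrite X0.
split.
  exists i, (fun x => match nX x with end).
  by split=> [x | ]; [ | apply: boolp.funext => x]; case: (nX x).
move=> j g g' _ _ _ _; exists j, (Order.POrderTheory.lexx j).
by apply: boolp.funext => x; case: (nX x).
Qed.

Lemma empty_of_fin_gen_emb (C : topologicalType -> Prop)
    (K : topologicalType) (t f : K) (D X : topologicalType) :
  reflective C -> iso_closed C -> C K -> is_discrete K -> t <> f ->
  is_discrete D -> ~ C D -> fin_gen_emb C X -> [set: X] = set0.
Proof.
move=> refl isoC CK dK tf dD nCD fgX; apply/seteqP; split=> // x0 _.
have [R [eta reta]] := refl D; apply: nCD.
have CZ (F : fset_incl D) : C (fsub_space F).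
  have [R' [eta' reta']] := refl (fsub_space F).
  apply: (finite_discrete_mem reta' CK dK tf isoC).
    exact: discrete_topology_discrete.
  exact: finite_finset.
apply: (discrete_mem_of_surjective reta CK dK tf isoC dD) => r.
have [[F [g [_ rg]]] _] := fgX _ _ _ _ _ _ (fset_incl_directed D) CZ
  (fsub_incl_diagram D) (@fsub_incl_embedding D) (fsub_cocone_colimit dD reta)
  (fun=> r) (@cst_continuous _ _ r).
by exists (fsval (g x0)); rewrite [RHS](congr1 (fun h => h x0) rg).
Qed.

Section FiniteNonisolated.
Variables (X : topologicalType) (A : set X).
Hypotheses (hX : hausdorff_space X) (finA : finite_set A)
  (isolated : forall x, ~ A x -> open [set x]).

Lemma open_setC1 (x : X) : open (~` [set x]).
Proof. by rewrite openC; apply: accessible_closed_set1; exact: hausdorff_accessible. Qed.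

Definition disjoint_nbhds (W : X -> set X) : Prop :=
  [/\ forall a, open (W a), forall a, A a -> W a a, forall a x, W a x -> A a
    & forall a b x, W a x -> W b x -> a = b].

Lemma disjoint_nbhds_exists : exists W, disjoint_nbhds W.
Proof.
have sep a b : exists UV : set X * set X, a <> b ->
    [/\ UV.1 a, UV.2 b, open UV.1, open UV.2 & UV.1 `&` UV.2 = set0].
  have [<-|/eqP ab] := pselect (a = b); first by exists (set0, set0).
  have := hX; rewrite open_hausdorff => /(_ a b ab)[UV [aU bV] [oU oV /eqP UV0]].
  by exists UV => _; split=> //; exact: set_mem.
have /boolp.choice[Q HQ] a : exists Qa : X -> set X * set X, forall b, a <> b ->
    [/\ (Qa b).1 a, (Qa b).2 b, open (Qa b).1, open (Qa b).2
      & (Qa b).1 `&` (Qa b).2 = set0].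
  by have [Qa HQa] := boolp.choice (sep a); exists Qa.
exists (fun a => [set x | A a /\ (\bigcap_(b in A `\ a) ((Q a b).1 `&` (Q b a).2)) x]).
split=> [a | a Aa | a x [] // | a b x [Aa Wa] [Ab Wb]].
- rewrite openE => x [Aa Wx].
  apply: (@filterS _ _ _ (\bigcap_(b in A `\ a) ((Q a b).1 `&` (Q b a).2))).
    by move=> y Wy; split.
  apply: open_nbhs_nbhs; split=> //; apply: open_bigcap_finite; first exact: finite_setD.
  move=> b [_ /= ba]; have [_ _ oQ _ _] := HQ _ _ (nesym ba).
  by have [_ _ _ oQ' _] := HQ _ _ ba; exact: openI.
- split=> // b [_ /= ba]; split.
    by have [] := HQ _ _ (nesym ba).
  by have [] := HQ _ _ ba.
- apply: boolp.contrapT => ab.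
  have [_ _ _ _ /seteqP[Q0 _]] := HQ _ _ ab.
  apply: (Q0 x); split.
    by have [] := Wa b (conj Ab (nesym ab)).
  by have [] := Wb a (conj Aa ab).
Qed.

Lemma disjoint_nbhdsI (W O : X -> set X) :
  disjoint_nbhds W -> (forall a, open (O a)) -> (forall a, A a -> O a a) ->
  disjoint_nbhds (fun a => W a `&` O a).
Proof.
move=> [oW aW WA Wdisj] oO aO.
split=> [a | a Aa | a x [/WA] | a b x [/Wdisj Wa _] [/Wa]] //.
  exact: openI.
by split; [exact: aW | exact: aO].
Qed.

Definition collapse (W : X -> set X) (x : X) : X :=
  if pselect (exists a, W a x) is left h then projT1 (cid h) else x.

Section CollapseMap.
Variable W : X -> set X.
Hypothesis dW : disjoint_nbhds W.

Lemma collapse_in a x : W a x -> collapse W x = a.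
Proof.
move=> Wax; rewrite /collapse; case: pselect => [h | []]; last by exists a.
by case: cid => b /= Wbx; case: dW => _ _ _ /(_ _ _ _ Wbx Wax).
Qed.

Lemma collapse_out x : ~ (exists a, W a x) -> collapse W x = x.
Proof. by rewrite /collapse; case: pselect. Qed.

Lemma collapse_fix a : A a -> collapse W a = a.
Proof. by move=> Aa; apply: collapse_in; have [_ aW _ _] := dW; exact: aW. Qed.

Lemma collapse_notin y : ~ A (collapse W y) -> collapse W y = y.
Proof.
have [[a Way] | nW] := pselect (exists a, W a y); last by rewrite collapse_out.
by have [_ _ WA _] := dW; rewrite (collapse_in Way) => /(_ (WA _ _ Way)).
Qed.

Lemma collapse_eq_in a y : A a -> collapse W y = a -> W a y.
Proof.
move=> Aa; have [[b Wby] | nW] := pselect (exists b, W b y).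
  by rewrite (collapse_in Wby) => <-.
by rewrite collapse_out // => ->; have [_ aW _ _] := dW; exact: aW.
Qed.

Lemma collapse_continuous : continuous (collapse W : X -> discrete_topology X).
Proof.
apply: continuous_of_locally_constant => x; rewrite nbhsE.
have [[a Wax] | nW] := pselect (exists a, W a x).
  exists (W a); first by split=> //; have [oW _ _ _] := dW.
  by move=> y Way; rewrite /= (collapse_in Way) (collapse_in Wax).
have nAx : ~ A x by move=> Ax; apply: nW; exists x; have [_ aW _ _] := dW; exact: aW.
by exists [set x]; [split; [exact: isolated | ] | move=> y /= ->].
Qed.
End CollapseMap.

Lemma collapse_refine (W W' : X -> set X) :
  disjoint_nbhds W -> disjoint_nbhds W' -> (forall a, W' a `<=` W a) ->
  collapse W \o collapse W' = collapse W.
Proof.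
move=> dW dW' W'W; apply: boolp.funext => x /=.
have [[a W'ax] | nW'] := pselect (exists a, W' a x); last by rewrite (collapse_out nW').
rewrite (collapse_in dW' W'ax) (collapse_in dW (W'W _ _ W'ax)) collapse_fix //.
by have [_ _ W'A _] := dW'; exact: W'A W'ax.
Qed.

Lemma collapse_fiber_sub (x : X) (U : set X) : open U -> U x ->
  exists2 W, disjoint_nbhds W & collapse W @^-1` [set collapse W x] `<=` U.
Proof.
move=> oU Ux; have [W0 dW0] := disjoint_nbhds_exists.
pose O a := if a == x then U else ~` [set x].
have oO a : open (O a) by rewrite /O; case: eqP => // _; exact: open_setC1.
set W := fun a => W0 a `&` O a.
have dW : disjoint_nbhds W.
  by apply: disjoint_nbhdsI => // a Aa; rewrite /O; case: eqP => // ->.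
exists W => // y /=.
have [Ax | nAx] := pselect (A x).
  rewrite (collapse_fix dW Ax) => /(collapse_eq_in dW Ax)[_].
  by rewrite /O eqxx.
have xfix : collapse W x = x.
  apply: collapse_out => -[a [W0ax]]; rewrite /O; case: eqP => [ax _ | _ /(_ erefl)] //.
  by apply: nAx; rewrite -ax; have [_ _ W0A _] := dW0; exact: W0A W0ax.
rewrite xfix => yx; have := collapse_notin dW (y := y).
by rewrite yx => /(_ nAx) <-.
Qed.

Lemma collapse_separates (x y : X) : x <> y ->
  exists2 W, disjoint_nbhds W & collapse W x <> collapse W y.
Proof.
move=> xy; have [W dW fib] := collapse_fiber_sub (open_setC1 y) xy.
by exists W => // e; exact: fib y (esym e) erefl.
Qed.

Section Lifts.
Variables (C : topologicalType -> Prop) (R : topologicalType) (eta : X -> R).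
Hypotheses (reta : is_reflection C eta) (CXd : C (discrete_topology X)).
Variable G : (X -> set X) -> R -> X.
Hypotheses (G_continuous : forall W, disjoint_nbhds W ->
                             continuous (G W : R -> discrete_topology X))
           (G_eta : forall W, disjoint_nbhds W -> G W \o eta = collapse W).

Lemma lift_refine (W W' : X -> set X) :
  disjoint_nbhds W -> disjoint_nbhds W' -> (forall a, W' a `<=` W a) ->
  G W = collapse W \o G W'.
Proof.
move=> dW dW' W'W; apply: (reflection_ext reta CXd (G_continuous dW)).
  by apply: comp_continuous (G_continuous dW') _; exact: discrete_topology_continuous.
by rewrite [LHS](G_eta dW) -[LHS](collapse_refine dW dW' W'W) -(G_eta dW').
Qed.

Lemma lift_limit_exists (r : R) :
  exists x, forall W, disjoint_nbhds W -> G W r = collapse W x.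
Proof.
have dI W W' : disjoint_nbhds W -> disjoint_nbhds W' ->
    disjoint_nbhds (fun a => W a `&` W' a).
  by move=> dW [oW' aW' _ _]; exact: disjoint_nbhdsI.
have Gr W W' : disjoint_nbhds W -> disjoint_nbhds W' -> (forall a, W' a `<=` W a) ->
    G W r = collapse W (G W' r).
  by move=> dW dW' W'W; rewrite (lift_refine dW dW' W'W).
(* Either some lift sends r off A, and then all lifts see the same isolated
   point, or all lifts send r into A, where they all agree. *)
have [[W dW nAW] | allA] := pselect (exists2 W, disjoint_nbhds W & ~ A (G W r)).
  exists (G W r) => W' dW'; have dV := dI _ _ dW dW'.
  have GV : G (fun a => W a `&` W' a) r = G W r.
    rewrite [RHS](Gr _ _ dW dV) => [|a y []//]; apply/esym/collapse_notin => //.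
    by rewrite -(Gr _ _ dW dV) => [|a y []].
  by rewrite (Gr _ _ dW' dV) ?GV // => a y [].
have [W0 dW0] := disjoint_nbhds_exists.
exists (G W0 r) => W dW; have dV := dI _ _ dW dW0.
have AV : A (G (fun a => W a `&` W0 a) r).
  by apply: boolp.contrapT => nA; apply: allA; exists (fun a => W a `&` W0 a).
rewrite (Gr _ _ dW dV) => [|a y []//].
by rewrite (Gr _ _ dW0 dV) ?(collapse_fix dW0 AV) // => a y [].
Qed.

Lemma lift_limit_unique (r : R) (x y : X) :
  (forall W, disjoint_nbhds W -> G W r = collapse W x) ->
  (forall W, disjoint_nbhds W -> G W r = collapse W y) -> x = y.
Proof.
move=> Gx Gy; apply: boolp.contrapT => /collapse_separates[W dW].
by rewrite -(Gx _ dW) -(Gy _ dW).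
Qed.

Definition lift_limit (r : R) : X := projT1 (cid (lift_limit_exists r)).

Lemma lift_limitP (r : R) W : disjoint_nbhds W -> G W r = collapse W (lift_limit r).
Proof. by rewrite /lift_limit; case: cid => x /=; apply. Qed.

Lemma lift_limit_continuous : continuous lift_limit.
Proof.
move=> r B; rewrite /= nbhsE => -[U [oU Ur] UB].
have [W dW fib] := collapse_fiber_sub oU Ur.
rewrite nbhsE; exists (G W @^-1` [set G W r]).
  by split=> //; exact: open_preimage_discrete (G_continuous dW).
by move=> r' /= e; apply/UB/fib; rewrite /= -!lift_limitP.
Qed.

Lemma lift_limit_eta : lift_limit \o eta = id.
Proof.
apply: boolp.funext => x /=; apply: (lift_limit_unique (lift_limitP (eta x))).
by move=> W dW; rewrite -(G_eta dW).
Qed.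

Lemma mem_of_collapse_lifts : iso_closed C -> C X.
Proof.
move=> isoC; apply: (reflection_retract_mem reta isoC lift_limit_continuous).
exact: lift_limit_eta.
Qed.
End Lifts.

Lemma mem_of_finite_nonisolated (C : topologicalType -> Prop) :
  reflective C -> iso_closed C -> (forall Y, is_discrete Y -> C Y) -> C X.
Proof.
move=> refl isoC hdisc.
have [[x0 _] | X0] := pselect (exists x : X, True); last first.
  apply: hdisc => B; suff -> : B = set0 by exact: open0.
  by apply/seteqP; split=> // x _; apply: X0; exists x.
have CXd := hdisc _ (@discrete_topology_discrete X).
have [R [eta reta]] := refl X.
have /boolp.choice[G GP] W : exists g : R -> X, disjoint_nbhds W ->
    continuous (g : R -> discrete_topology X) /\ g \o eta = collapse W.
  have [dW | ndW] := pselect (disjoint_nbhds W); last by exists (fun=> x0) => /ndW.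
  have [g cg ge] := reflection_lift reta CXd (collapse_continuous dW).
  by exists g => _; split.
exact: (mem_of_collapse_lifts reta CXd (fun W dW => (GP W dW).1) (fun W dW => (GP W dW).2)).
Qed.
End FiniteNonisolated.

Unset Implicit Arguments.
Theorem lemma7p2 (C : topologicalType -> Prop) :
  reflective C -> iso_closed C ->
  (exists X : topologicalType, C X /\ is_discrete X /\ ([set: X] #= [set: bool])%card) ->
  ((exists X : topologicalType, is_discrete X /\ ~ C X) ->
     forall X : topologicalType, C X -> (fin_gen_emb C X <-> [set: X] = set0)) /\
  ((forall X : topologicalType, is_discrete X -> C X) ->
     forall X : topologicalType, hausdorff_space X ->
       finite_set [set x : X | accumulation_point x] -> C X).
Proof.
move=> refl isoC [K [CK [dK /card_bool_two[t [f tf]]]]]; split.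
  move=> [D [dD nCD]] X _; split; last exact: fin_gen_emb_of_empty.
  exact: empty_of_fin_gen_emb refl isoC CK dK tf dD nCD.
move=> hdisc X hX finA.
by apply: (mem_of_finite_nonisolated hX finA) => // x /boolp.contrapT.
Qed.
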